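(* $A(Q_{\min})=\frac{2\vec\rho}{b+1}+\mathrm{Reg}^\star$. Equivalently, $A(Q_{\min})$ is the set of $y\in\mathbb{R}^d$ with $y_1+\dots+y_d=0$ and $(y_1+\dots+y_s)-b(y_{d+1-s}+\dots+y_d)\ge s(d-s)$ for all $s\in\{1,\dots,d-1\}$, and this set equals $\{\frac{2\vec\rho}{b+1}+\sum_{i=1}^{d-1}\lambda_i(b\,\vec v_{d-i}-\vec v_i):\lambda_i\ge0\}$.
   Context: Let $b\ge2$, $d\ge1$ be integers, $I=\{(i,j)\in\mathbb{Z}^2:1\le i\le j\le d\}$, $E=\mathbb{R}^I$. For $q\in E$ and $(i,j)\in I$ put $\mu_{i,j}(q)=bq_{j,j}-q_{j,d}+b\sum_{s=i}^{j-1}(q_{s,j}-q_{s,j-1})$ and $\ell(q)=b\sum_{(i,j)\in I}q_{i,j}+\sum_{i=1}^d(2i-1-d-bi)q_{i,d}$. $Q_{\min}$ is the cone of $q\in E$ with $q_{i,j}\ge q_{i,j+1}$ and $q_{i,j}=q_{i+1,j+1}$ for all $1\le i\le j<d$. For a cone $Q'\subset E$, $A(Q')=\{y\in\mathbb{R}^d:\sum_{j=1}^dy_j\,\mu_{1,j}(q)\ge\ell(q)\ \forall q\in Q'\}$. $\vec\rho=(\frac{d+1}2-i)_{1\le i\le d}$. $\mathrm{Reg}\subset\mathbb{R}^d$ is the cone of $b$-regular vectors, i.e. $\mu$ with $\mu_i-\mu_{i+1}\le b(\mu_{d-i}-\mu_{d-i+1})$ for $1\le i\le d-1$, and $\mathrm{Reg}^\star$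 its dual cone for the standard scalar product. $\vec v_i=e_i-e_{i+1}$ where $(e_i)$ is the canonical basis of $\mathbb{R}^d$. *)

From HB Require Import structures.
From mathcomp Require Import all_boot all_order all_algebra.
Set Implicit Arguments. Unset Strict Implicit. Unset Printing Implicit Defensive.
Import Order.TTheory GRing.Theory Num.Theory.
Local Open Scope ring_scope.

(* Elements q of E = R^I are represented as functions nat -> nat -> R; only the
   values q i j with 1 <= i <= j <= d are ever used (1-based indices). *)

(* 1-based coordinate y_k of a vector y : 'rV_d (0 outside 1..d). *)
Definition ycoord (R : nzRingType) (d : nat) (y : 'rV[R]_d) (k : nat) : R :=
  if k is k'.+1 then (if insub k' is Some i then y ord0 i else 0) else 0.

Definition mu (R : nzRingType) (b d : nat) (q : nat -> nat -> R) (i j : nat) : R :=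
  b%:R * q j j - q j d + b%:R * \sum_(i <= s < j) (q s j - q s j.-1).

Definition ell (R : nzRingType) (b d : nat) (q : nat -> nat -> R) : R :=
  b%:R * (\sum_(1 <= j < d.+1) \sum_(1 <= i < j.+1) q i j)
  + \sum_(1 <= i < d.+1)
      ((2 * i)%:R - 1 - d%:R - (b * i)%:R) * q i d.

Definition Qmin (R : numDomainType) (d : nat) (q : nat -> nat -> R) : Prop :=
  forall i j, (1 <= i)%N -> (i <= j)%N -> (j < d)%N ->
    q i j.+1 <= q i j /\ q i j = q i.+1 j.+1.

Definition Aset (R : numDomainType) (b d : nat) (Q : (nat -> nat -> R) -> Prop)
  (y : 'rV[R]_d) : Prop :=
  forall q, Q q ->
    ell b d q <= \sum_(1 <= j < d.+1) ycoord y j * mu b d q 1 j.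

Definition rho (R : fieldType) (d : nat) : 'rV[R]_d :=
  \row_(k < d) ((d%:R + 1) / 2 - (k.+1)%:R).

Definition Reg (R : numDomainType) (b d : nat) (m : 'rV[R]_d) : Prop :=
  forall i, (1 <= i)%N -> (i <= d - 1)%N ->
    ycoord m i - ycoord m i.+1 <= b%:R * (ycoord m (d - i) - ycoord m (d - i).+1).

Definition RegDual (R : numDomainType) (b d : nat) (y : 'rV[R]_d) : Prop :=
  forall m : 'rV[R]_d, Reg b m -> 0 <= \sum_(k < d) y ord0 k * m ord0 k.

(* v_i = e_i - e_{i+1} (1-based; e_{d+1} = 0) *)
Definition vvec (R : nzRingType) (d i : nat) : 'rV[R]_d :=
  \row_(k < d) ((k.+1 == i)%:R - (k.+1 == i.+1)%:R).

(* Every q in Q_min is a Toeplitz matrix q_{i,j} = c_{j-i} with c nonincreasing, and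
   every such c arises. On these q the defining inequality of A(Q_min) reads
   sum_k alpha_k c_k >= 0 with alpha_k = b y_{k+1} - y_{d-k} - 2 rho_{k+1}; by Abel
   summation this holds for all nonincreasing c iff the alpha_k sum to 0 and have
   nonnegative partial sums, which unfold to the stated inequalities. Subtracting the
   shift 2 rho / (b + 1), for which all these inequalities are equalities, leaves the
   homogeneous system "sum z = 0 and z_1 + .. + z_s - b (z_{d+1-s} + .. + z_d) >= 0".
   Its solutions are the nonnegative combinations of the b v_{d-i} - v_i, with
   coefficients (S_i + b S_{d-i}) / (b^2 - 1) where S are the partial sums of z. These
   generators pair nonnegatively with b-regular vectors, and pairing with the b-regular
   vectors 1, -1 and 1_{[1,s]} + b 1_{[1,d-s]} gives back the homogeneous system. *)

From HB Require Import structures.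
From mathcomp Require Import all_boot all_order all_algebra.
From mathcomp Require Import zify ring.
Import Order.TTheory GRing.Theory Num.Theory.
Local Open Scope ring_scope.
Set Implicit Arguments. Unset Strict Implicit. Unset Printing Implicit Defensive.

Section NatSums.
Variable V : zmodType.
Implicit Types (F : nat -> V).

Lemma big_nat_rev1 n F : \sum_(1 <= i < n) F i = \sum_(1 <= i < n) F (n - i)%N.
Proof. by rewrite big_nat_rev; apply: eq_big_nat => i _; rewrite add1n subSS. Qed.

Lemma sum_nat_tail F m n : (m <= n)%N ->
  \sum_(m.+1 <= k < n.+1) F k = \sum_(1 <= k < n.+1) F k - \sum_(1 <= k < m.+1) F k.
Proof. by move=> m_le; rewrite (@big_cat_nat _ _ _ m.+1 1 n.+1) //= addrC addrK. Qed.

Lemma sum_nat_last F n s : (s <= n)%N ->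
  \sum_(0 <= k < s) F (n - k)%N = \sum_(n.+1 - s <= k < n.+1) F k.
Proof.
elim: s => [|s IH] s_lt; first by rewrite !big_geq ?subn0.
rewrite big_nat_recr //= IH ?(ltnW s_lt) // subSS (@big_ltn _ _ _ (n - s)%N); last by lia.
by rewrite addrC subSn ?(ltnW s_lt).
Qed.

End NatSums.

Section RingSums.
Variable R : comPzRingType.
Implicit Types (F a c : nat -> R).

Lemma sum_nat_delta n F k : (k <= n)%N -> F 0%N = 0 -> F n = 0 ->
  \sum_(1 <= i < n) F i * (k == i)%:R = F k.
Proof.
move=> k_le F0 Fn; have [k_in | k_out] := boolP (1 <= k < n)%N.
  rewrite (bigD1_seq k) ?mem_index_iota ?iota_uniq //= eqxx mulr1.
  rewrite big1_seq ?addr0 // => i /andP[i_neq _].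
  by rewrite eq_sym (negbTE i_neq) mulr0.
have [-> | ->] : k = 0%N \/ k = n by move: k_out; rewrite negb_and -ltnNge -leqNgt; lia.
all: rewrite ?F0 ?Fn big1_seq // => i /andP[_]; rewrite mem_index_iota => /andP[i_ge1 i_lt].
all: by case: eqP => [ki | _]; [lia | rewrite mulr0].
Qed.

Lemma sum_prefix_indicator F n t : (t <= n)%N ->
  \sum_(1 <= k < n.+1) F k * (k <= t)%:R = \sum_(1 <= k < t.+1) F k.
Proof.
move=> t_le; rewrite (@big_cat_nat _ _ _ t.+1 1 n.+1) //= [X in _ + X]big1_seq ?addr0.
  by apply: eq_big_nat => k /andP[_ k_le]; rewrite -ltnS k_le mulr1.
by move=> k /andP[_]; rewrite mem_index_iota => /andP[k_gt _]; rewrite leqNgt k_gt mulr0.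
Qed.

Lemma sum_by_parts a c n :
  \sum_(0 <= k < n.+1) a k * c k =
  (\sum_(0 <= k < n.+1) a k) * c n
  + \sum_(0 <= s < n) (\sum_(0 <= k < s.+1) a k) * (c s - c s.+1).
Proof.
elim: n => [|n IH]; first by rewrite !big_nat1 big_geq // addr0.
rewrite big_nat_recr //= IH [in RHS]big_nat_recr //= [X in _ = _ + X]big_nat_recr //=.
ring.
Qed.

Lemma sum_triangle c n :
  \sum_(0 <= j < n) \sum_(0 <= i < j.+1) c i = \sum_(0 <= k < n) (n - k)%:R * c k.
Proof.
elim: n => [|n IH]; first by rewrite !big_geq.
rewrite big_nat_recr //= IH [in RHS]big_nat_recr //= subSnn mul1r.
rewrite [in LHS]big_nat_recr //= addrA; congr (_ + _).
rewrite -big_split /=; apply: eq_big_nat => k /andP[_ k_lt].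
by rewrite subSn ?(ltnW k_lt) // -natr1 mulrDl mul1r.
Qed.

End RingSums.

Lemma dual_nonincreasingP (R : numDomainType) (a : nat -> R) n : (1 <= n)%N ->
  (forall c : nat -> R, (forall k, (k.+1 < n)%N -> c k.+1 <= c k) ->
     0 <= \sum_(0 <= k < n) a k * c k) <->
  \sum_(0 <= k < n) a k = 0 /\
  (forall s, (1 <= s)%N -> (s <= n - 1)%N -> 0 <= \sum_(0 <= k < s) a k).
Proof.
move=> n_gt0; split=> [dual | [sum0 partial_ge0] c c_noninc].
  have dual_const x : 0 <= (\sum_(0 <= k < n) a k) * x.
    by rewrite mulr_suml; apply: (dual (fun=> x)) => k _; apply: lexx.
  split.
    have := dual_const 1; have := dual_const (-1).
    rewrite mulr1 mulrN1 oppr_ge0 => le0 ge0.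
    by apply/eqP; rewrite eq_le le0 ge0.
  move=> s s_ge1 s_le; have s_le_n : (s <= n)%N by lia.
  have := dual (fun k => (k < s)%:R).
  rewrite (@big_cat_nat _ _ _ s 0 n) //= [X in _ + X]big1_seq ?addr0; last first.
    by move=> i /andP[_]; rewrite mem_index_iota => /andP[i_ge _]; rewrite ltnNge i_ge mulr0.
  rewrite (eq_big_nat _ _ (F2 := a)); last by move=> i /andP[_ i_lt]; rewrite i_lt mulr1.
  apply=> k _; rewrite ler_nat.
  by case: (ltnP k.+1 s) => [k_lt | //]; rewrite (ltnW k_lt).
case: n n_gt0 sum0 partial_ge0 c_noninc => // n _ sum0 partial_ge0 c_noninc.
rewrite sum_by_parts sum0 mul0r add0r big_seq; apply: sumr_ge0 => s.
rewrite mem_index_iota => /andP[_ s_lt].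
apply: mulr_ge0; first by apply: partial_ge0 => //; rewrite subn1.
by rewrite subr_ge0; apply: c_noninc.
Qed.

Section Coordinates.
Variables (R : comNzRingType) (d : nat).
Implicit Types (y z m : 'rV[R]_d).

Lemma ycoordE y (k : 'I_d) : ycoord y k.+1 = y ord0 k.
Proof. by rewrite /ycoord valK. Qed.

Lemma ycoord_out y k : (d < k)%N -> ycoord y k = 0.
Proof.
by case: k => // k k_gt; rewrite /ycoord insubF //; apply/negbTE; rewrite -leqNgt.
Qed.

Lemma ycoordB y z k : ycoord (y - z) k = ycoord y k - ycoord z k.
Proof.
case: k => [|k]; first by rewrite subr0.
by rewrite /ycoord; case: insubP => [i _ _|_]; rewrite ?mxE ?subr0.
Qed.

Lemma ycoord_row (G : nat -> R) j : (1 <= j)%N -> (j <= d)%N ->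
  ycoord (\row_(k < d) G k.+1) j = G j.
Proof. by case: j => // j _ j_lt; rewrite -[j]/(nat_of_ord (Ordinal j_lt)) ycoordE mxE. Qed.

Lemma sum_ycoord y (G : nat -> R -> R) :
  \sum_(k < d) G k.+1 (y ord0 k) = \sum_(1 <= k < d.+1) G k (ycoord y k).
Proof. by rewrite big_add1 /= big_mkord; apply: eq_bigr => k _; rewrite valK. Qed.

Lemma sum_ycoord_delta y i : \sum_(k < d) (k.+1 == i)%:R * y ord0 k = ycoord y i.
Proof.
rewrite (sum_ycoord y (fun k x => (k == i)%:R * x)).
have [i_le | i_gt] := leqP i d.+1.
  under eq_bigr do rewrite mulrC eq_sym.
  by rewrite sum_nat_delta // ycoord_out.
rewrite ycoord_out ?(ltnW i_gt) // big1_seq // => k /andP[_]; rewrite mem_index_iota => k_in.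
by case: eqP => [ki | _]; [lia | rewrite mul0r].
Qed.

Definition dotr y m : R := \sum_(k < d) y ord0 k * m ord0 k.

Lemma dotr_vvec i m : dotr (vvec R d i) m = ycoord m i - ycoord m i.+1.
Proof.
by rewrite -!sum_ycoord_delta -sumrB; apply: eq_bigr => k _; rewrite mxE mulrBl.
Qed.

Lemma dotr_sumZl (I : Type) (r : seq I) (P : pred I) (lam : I -> R) (w : I -> 'rV[R]_d) m :
  dotr (\sum_(i <- r | P i) lam i *: w i) m = \sum_(i <- r | P i) lam i * dotr (w i) m.
Proof.
rewrite /dotr; under eq_bigr do rewrite summxE mulr_suml.
rewrite exchange_big; apply: eq_bigr => i _; rewrite mulr_sumr.
by apply: eq_bigr => k _; rewrite mxE mulrA.
Qed.

Lemma dotr_row z (G : nat -> R) :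
  dotr z (\row_(k < d) G k.+1) = \sum_(1 <= k < d.+1) ycoord z k * G k.
Proof.
rewrite -(sum_ycoord z (fun k x => x * G k)).
by apply: eq_bigr => k _; rewrite mxE.
Qed.

End Coordinates.

Definition toeplitz (R : Type) (d : nat) (q : nat -> nat -> R) (c : nat -> R) :=
  forall i j, (1 <= i)%N -> (i <= j)%N -> (j <= d)%N -> q i j = c (j - i)%N.

Section Toeplitz.
Variables (R : comNzRingType) (b d : nat).

(* [rho2 k] is the k-th coordinate of [2 rho]. *)
Definition rho2 (k : nat) : R := d%:R + 1 - (2 * k)%:R.

Lemma sum_rho2 s : (s <= d)%N -> \sum_(1 <= k < s.+1) rho2 k = (s * (d - s))%:R.
Proof.
elim: s => [|s IH] s_lt; first by rewrite big_geq // mul0n.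
rewrite big_nat_recr //= IH ?(ltnW s_lt) //; apply: (addIr (2 * s.+1)%:R).
by rewrite /rho2 addrA subrK natr1 -!natrD; congr _%:R; nia.
Qed.

Definition alpha (x : nat -> R) k : R := b%:R * x k.+1 - x (d - k)%N - rho2 k.+1.

Lemma sum_alpha x s : (s <= d)%N ->
  \sum_(0 <= k < s) alpha x k =
  b%:R * \sum_(1 <= k < s.+1) x k - \sum_(d.+1 - s <= k < d.+1) x k - (s * (d - s))%:R.
Proof.
move=> s_le.
by rewrite /alpha 2!sumrB -mulr_sumr sum_nat_last // -sum_rho2 // !big_add1.
Qed.

Variables (q : nat -> nat -> R) (c : nat -> R).
Hypothesis q_toeplitz : toeplitz d q c.

Lemma mu_toeplitz j : (1 <= j)%N -> (j <= d)%N ->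
  mu b d q 1 j = b%:R * c j.-1 - c (d - j)%N.
Proof.
move=> j_ge1 j_le; rewrite /mu (q_toeplitz (i:=j) (j:=j)) // (q_toeplitz (i:=j) (j:=d)) // subnn.
have -> : \sum_(1 <= s < j) (q s j - q s j.-1) = c j.-1 - c 0%N.
  transitivity (\sum_(1 <= s < j) (c s - c s.-1)).
    rewrite big_nat_rev1; apply: eq_big_nat => s /andP[s_ge1 s_lt].
    rewrite (q_toeplitz (j:=j)) ?(q_toeplitz (j:=j.-1)); try lia.
    by congr (c _ - c _); lia.
  by case: j j_ge1 {j_le} => // j _; rewrite big_add1 telescope_sumr.
ring.
Qed.

Lemma ell_toeplitz : ell b d q = \sum_(0 <= k < d) rho2 k.+1 * c k.
Proof.
have diag_sums : \sum_(1 <= j < d.+1) \sum_(1 <= i < j.+1) q i j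
    = \sum_(0 <= k < d) (d - k)%:R * c k.
  rewrite -sum_triangle big_add1 /=; apply: eq_big_nat => j /andP[_ j_lt].
  rewrite (eq_big_nat _ _ (F2 := fun i => c (j.+1 - i)%N)); last first.
    by move=> i /andP[i_ge1 i_le]; rewrite q_toeplitz.
  rewrite big_nat_rev1 big_add1 /=; apply: eq_big_nat => i /andP[_ i_lt].
  by congr c; lia.
have last_col : \sum_(1 <= i < d.+1) ((2 * i)%:R - 1 - d%:R - (b * i)%:R) * q i d
    = \sum_(0 <= k < d) ((2 * (d - k))%:R - 1 - d%:R - (b * (d - k))%:R) * c k.
  rewrite big_add1 /= big_nat_rev /=; apply: eq_big_nat => k /andP[_ k_lt].
  have -> : (0 + d - k.+1).+1 = (d - k)%N by lia.
  by rewrite q_toeplitz; [congr (_ * c _) | ..]; lia.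
rewrite /ell diag_sums last_col mulr_sumr -big_split /=.
apply: eq_big_nat => k /andP[_ k_lt].
by rewrite /rho2 !natrM natrB ?(ltnW k_lt) //; ring.
Qed.

Lemma sum_mu_toeplitz (x : nat -> R) :
  \sum_(1 <= j < d.+1) x j * mu b d q 1 j
  = \sum_(0 <= k < d) (b%:R * x k.+1 - x (d - k)%N) * c k.
Proof.
rewrite big_add1 /= (eq_big_nat _ _
  (F2 := fun k => b%:R * x k.+1 * c k - x k.+1 * c (d - k.+1)%N)); last first.
  by move=> k /andP[_ k_lt]; rewrite mu_toeplitz //=; ring.
rewrite sumrB [RHS](eq_bigr (fun k => b%:R * x k.+1 * c k - x (d - k)%N * c k)); last first.
  by move=> k _; rewrite mulrBl.
rewrite sumrB; congr (_ - _); rewrite big_nat_rev; apply: eq_big_nat => k /andP[_ k_lt].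
have -> : (0 + d - k.+1).+1 = (d - k)%N by lia.
by rewrite subKn ?(ltnW k_lt).
Qed.

Lemma sum_mu_sub_ell_toeplitz (x : nat -> R) :
  \sum_(1 <= j < d.+1) x j * mu b d q 1 j - ell b d q
  = \sum_(0 <= k < d) alpha x k * c k.
Proof.
rewrite sum_mu_toeplitz ell_toeplitz -sumrB.
by apply: eq_bigr => k _; rewrite /alpha [RHS]mulrBl.
Qed.

End Toeplitz.

Lemma Qmin_toeplitz (R : numDomainType) (d : nat) (q : nat -> nat -> R) :
  Qmin d q -> toeplitz d q (fun k => q 1%N k.+1).
Proof.
move=> q_min.
have diag t j : (t < j)%N -> (j <= d)%N -> q t.+1 j = q 1%N (j - t)%N.
  elim: t j => [|t IH] j t_lt j_le; first by rewrite subn0.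
  have t_le : (t.+1 <= j.-1)%N by lia.
  have j_lt : (j.-1 < d)%N by lia.
  have [_ step] := q_min t.+1 j.-1 isT t_le j_lt.
  have jE : j.-1.+1 = j by lia.
  by rewrite jE in step; rewrite -step IH; [congr (q _ _) | ..]; lia.
move=> [//|t] j _ t_lt j_le.
by rewrite diag; [congr (q _ _) | ..]; lia.
Qed.

Lemma Aset_QminP (R : numDomainType) (b d : nat) (y : 'rV[R]_d) :
  Aset b (@Qmin R d) y <->
  (forall c : nat -> R, (forall k, (k.+1 < d)%N -> c k.+1 <= c k) ->
     0 <= \sum_(0 <= k < d) alpha b d (ycoord y) k * c k).
Proof.
split=> [y_in c c_noninc | alpha_dual q q_min].
  have c_toeplitz : toeplitz d (fun i j => c (j - i)%N) c by [].
  rewrite -(sum_mu_sub_ell_toeplitz b c_toeplitz) subr_ge0; apply: y_in.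
  move=> i j i_ge1 i_le j_lt; split; last by rewrite subSS.
  by rewrite subSn //; apply: c_noninc; lia.
rewrite -subr_ge0 (sum_mu_sub_ell_toeplitz b (Qmin_toeplitz q_min)).
by apply: alpha_dual => k k_lt; have [] := q_min 1%N k.+1 isT isT k_lt.
Qed.

Definition head_tail (R : nzRingType) (b d : nat) (x : nat -> R) (s : nat) : R :=
  \sum_(1 <= k < s.+1) x k - b%:R * \sum_(d.+1 - s <= k < d.+1) x k.

Definition Amin_ineqs (R : numDomainType) (b d : nat) (x : nat -> R) : Prop :=
  \sum_(1 <= k < d.+1) x k = 0 /\
  forall s, (1 <= s)%N -> (s <= d - 1)%N -> (s * (d - s))%:R <= head_tail b d x s.

Definition cone_ineqs (R : numDomainType) (b d : nat) (x : nat -> R) : Prop :=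
  \sum_(1 <= k < d.+1) x k = 0 /\
  forall s, (1 <= s)%N -> (s <= d - 1)%N -> 0 <= head_tail b d x s.

Section HeadTail.
Variables (R : comNzRingType) (b d : nat) (x : nat -> R).
Hypothesis sum0 : \sum_(1 <= k < d.+1) x k = 0.

Lemma head_tail_prefix s : (s <= d)%N ->
  head_tail b d x s = \sum_(1 <= k < s.+1) x k + b%:R * \sum_(1 <= k < (d - s).+1) x k.
Proof.
move=> s_le; rewrite /head_tail (subSn s_le) (sum_nat_tail x (leq_subr s d)) sum0.
by rewrite sub0r mulrN opprK.
Qed.

Lemma head_tail_sum_alpha s : (s <= d)%N ->
  head_tail b d x s = \sum_(0 <= k < d - s) alpha b d x k + (s * (d - s))%:R.
Proof.
move=> s_le; rewrite head_tail_prefix // sum_alpha ?leq_subr // (subSn (leq_subr s d)).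
rewrite subKn // (sum_nat_tail x s_le) sum0 sub0r mulnC; ring.
Qed.

End HeadTail.

Lemma Aset_QminE (R : numDomainType) (b d : nat) (y : 'rV[R]_d) :
  (b != 1)%N -> (1 <= d)%N ->
  Aset b (@Qmin R d) y <-> Amin_ineqs b d (ycoord y).
Proof.
move=> b_neq1 d_ge1.
apply: (iff_trans (Aset_QminP _ _)); apply: (iff_trans (dual_nonincreasingP _ d_ge1)).
set x := ycoord y.
have sum_alpha_all :
    \sum_(0 <= k < d) alpha b d x k = (b%:R - 1) * \sum_(1 <= k < d.+1) x k.
  by rewrite sum_alpha // subSnn subnn muln0 subr0 mulrBl mul1r.
have b1_neq0 : (b%:R - 1 : R) != 0 by rewrite subr_eq0 pnatr_eq1.
split=> [[alpha0 alpha_ge0] | [sum0 ineqs]].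
  have sum0 : \sum_(1 <= k < d.+1) x k = 0.
    move: alpha0; rewrite sum_alpha_all => /eqP.
    by rewrite mulf_eq0 (negbTE b1_neq0) => /eqP.
  split=> // s s_ge1 s_le.
  by rewrite head_tail_sum_alpha // ?lerDr; [apply: alpha_ge0 | ..]; lia.
split=> [|s s_ge1 s_le]; first by rewrite sum_alpha_all sum0 mulr0.
have ds_ge1 : (1 <= d - s)%N by lia.
have ds_le : (d - s <= d - 1)%N by lia.
have := ineqs (d - s)%N ds_ge1 ds_le.
by rewrite (head_tail_sum_alpha b sum0) ?leq_subr // lerDr subKn //; lia.
Qed.

Section Shift.
Variables (R : numFieldType) (b d : nat).

Definition rho_shift : 'rV[R]_d := (2 / (b%:R + 1)) *: rho R d.

Lemma ycoord_rho_shift k : (1 <= k)%N -> (k <= d)%N ->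
  ycoord rho_shift k = (b%:R + 1)^-1 * rho2 R d k.
Proof.
case: k => // k _ k_lt.
rewrite -[k]/(nat_of_ord (Ordinal k_lt)) ycoordE !mxE /rho2 /=.
have b1_neq0 : (b%:R + 1 : R) != 0 by rewrite natr1 pnatr_eq0.
by rewrite natrM; field.
Qed.

Lemma sum_rho_shift_prefix s : (s <= d)%N ->
  \sum_(1 <= k < s.+1) ycoord rho_shift k = (b%:R + 1)^-1 * (s * (d - s))%:R.
Proof.
move=> s_le; rewrite -sum_rho2 // mulr_sumr.
by apply: eq_big_nat => k /andP[k_ge1 k_le]; rewrite ycoord_rho_shift //; lia.
Qed.

Lemma sum_rho_shift : \sum_(1 <= k < d.+1) ycoord rho_shift k = 0.
Proof. by rewrite sum_rho_shift_prefix // subnn muln0 mulr0. Qed.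

Lemma head_tail_rho_shift s : (s <= d)%N ->
  head_tail b d (ycoord rho_shift) s = (s * (d - s))%:R.
Proof.
move=> s_le; rewrite (head_tail_prefix b sum_rho_shift) //.
rewrite !sum_rho_shift_prefix ?leq_subr // subKn // mulnC.
have b1_neq0 : (b%:R + 1 : R) != 0 by rewrite natr1 pnatr_eq0.
by field.
Qed.

Lemma Amin_ineqs_shift (y : 'rV[R]_d) :
  Amin_ineqs b d (ycoord y) <-> cone_ineqs b d (ycoord (y - rho_shift)).
Proof.
have head_tailB s : head_tail b d (ycoord (y - rho_shift)) s
    = head_tail b d (ycoord y) s - head_tail b d (ycoord rho_shift) s.
  by rewrite /head_tail !(eq_bigr _ (fun k _ => ycoordB y rho_shift k)) !sumrB; ring.
rewrite /cone_ineqs (eq_bigr _ (fun k _ => ycoordB y rho_shift k)) sumrB sum_rho_shift subr0.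
split=> -[sum0 ineqs]; split=> // s s_ge1 s_le.
  by rewrite head_tailB head_tail_rho_shift ?subr_ge0; [apply: ineqs | lia].
by have := ineqs s s_ge1 s_le; rewrite head_tailB head_tail_rho_shift ?subr_ge0 //; lia.
Qed.

End Shift.

Section Cone.
Variables (R : realFieldType) (b d : nat).

Definition cone_gen i : 'rV[R]_d := b%:R *: vvec R d (d - i) - vvec R d i.

Lemma sum_vvec_entry (f : nat -> R) (k : 'I_d) : f 0%N = 0 -> f d = 0 ->
  (\sum_(1 <= i < d) f i *: vvec R d i) ord0 k = f k.+1 - f k.
Proof.
move=> f0 fd; have k_lt := ltn_ord k; have k_le := ltnW k_lt.
rewrite summxE; under eq_bigr do rewrite !mxE mulrBr.
by rewrite sumrB; under [X in _ - X]eq_bigr do rewrite eqSS; rewrite !sum_nat_delta.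
Qed.

Lemma sum_vvec_rev_entry (f : nat -> R) (k : 'I_d) : f 0%N = 0 -> f d = 0 ->
  (\sum_(1 <= i < d) f i *: vvec R d (d - i)) ord0 k = f (d - k.+1)%N - f (d - k)%N.
Proof.
move=> f0 fd; rewrite big_nat_rev1.
rewrite (eq_big_nat _ _ (F2 := fun i => f (d - i)%N *: vvec R d i)); last first.
  by move=> i /andP[_ i_lt]; rewrite subKn ?(ltnW i_lt).
by apply: (sum_vvec_entry (f := fun i => f (d - i)%N)); rewrite ?subn0 ?subnn.
Qed.

Lemma sum_cone_gen_entry (lam : nat -> R) (k : 'I_d) : lam 0%N = 0 -> lam d = 0 ->
  (\sum_(1 <= i < d) lam i *: cone_gen i) ord0 k
  = b%:R * (lam (d - k.+1)%N - lam (d - k)%N) - (lam k.+1 - lam k).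
Proof.
move=> lam0 lamd.
have -> : \sum_(1 <= i < d) lam i *: cone_gen i
    = b%:R *: \sum_(1 <= i < d) lam i *: vvec R d (d - i)
      - \sum_(1 <= i < d) lam i *: vvec R d i.
  rewrite scaler_sumr -sumrB; apply: eq_bigr => i _.
  by rewrite /cone_gen scalerBr !scalerA mulrC.
by rewrite !mxE sum_vvec_rev_entry // sum_vvec_entry.
Qed.

Lemma dotr_cone_gen i (m : 'rV[R]_d) : dotr (cone_gen i) m
  = b%:R * (ycoord m (d - i) - ycoord m (d - i).+1) - (ycoord m i - ycoord m i.+1).
Proof.
rewrite -(dotr_vvec (d - i)) -(dotr_vvec i) /dotr mulr_sumr -sumrB.
by apply: eq_bigr => k _; rewrite /cone_gen !mxE; ring.
Qed.

Lemma cone_RegDual (lam : nat -> R) :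
  (forall i, (1 <= i)%N -> (i <= d - 1)%N -> 0 <= lam i) ->
  RegDual b (\sum_(1 <= i < d) lam i *: cone_gen i).
Proof.
move=> lam_ge0 m m_reg.
change (0 <= dotr (\sum_(1 <= i < d) lam i *: cone_gen i) m).
rewrite dotr_sumZl big_seq; apply: sumr_ge0 => i.
rewrite mem_index_iota => /andP[i_ge1 i_lt].
rewrite dotr_cone_gen; apply: mulr_ge0; first by apply: lam_ge0; lia.
by rewrite subr_ge0; apply: m_reg; lia.
Qed.

Lemma Reg_row (G : nat -> R) :
  (forall i, (1 <= i)%N -> (i <= d - 1)%N ->
     G i - G i.+1 <= b%:R * (G (d - i)%N - G (d - i).+1)) ->
  Reg b (\row_(k < d) G k.+1).
Proof. by move=> G_reg i i_ge1 i_le; rewrite !ycoord_row; try lia; apply: G_reg. Qed.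

Lemma RegDual_cone_ineqs (z : 'rV[R]_d) : (0 < b)%N ->
  RegDual b z -> cone_ineqs b d (ycoord z).
Proof.
move=> b_gt0 z_dual.
have dual_row (G : nat -> R) : Reg b (\row_(k < d) G k.+1) ->
    0 <= \sum_(1 <= k < d.+1) ycoord z k * G k.
  by move=> /z_dual; rewrite -dotr_row.
have dual_const (a : R) : 0 <= (\sum_(1 <= k < d.+1) ycoord z k) * a.
  rewrite mulr_suml; apply: (dual_row (fun=> a)).
  by apply: Reg_row => i _ _; rewrite !subrr mulr0.
have sum0 : \sum_(1 <= k < d.+1) ycoord z k = 0.
  have := dual_const 1; have := dual_const (-1).
  rewrite mulr1 mulrN1 oppr_ge0 => le0 ge0.
  by apply/eqP; rewrite eq_le le0 ge0.
split=> // s s_ge1 s_le.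
pose G j : R := (j <= s)%N%:R + b%:R * (j <= d - s)%N%:R.
have G_step j : G j - G j.+1 = (j == s)%:R + b%:R * (j == d - s)%N%:R.
  by rewrite /G; case: (ltngtP j s) => _; case: (ltngtP j (d - s)) => _ /=; ring.
have G_reg : Reg b (\row_(k < d) G k.+1).
  apply: Reg_row => i i_ge1 i_le; rewrite !G_step.
  have -> : (d - i == s)%N = (i == d - s)%N by apply/eqP/eqP => ?; lia.
  have -> : (d - i == d - s)%N = (i == s)%N by apply/eqP/eqP => ?; lia.
  rewrite -!natrM -!natrD -natrM ler_nat.
  by case: eqP => _; case: eqP => _ /=; nia.
have := dual_row G G_reg.
under eq_bigr do rewrite /G mulrDr mulrCA.
rewrite big_split /= -mulr_sumr !sum_prefix_indicator; try lia.
by rewrite (head_tail_prefix b sum0) //; lia.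
Qed.

Hypothesis b_ge2 : (2 <= b)%N.

Definition cone_coef (z : 'rV[R]_d) j : R :=
  (\sum_(1 <= k < j.+1) ycoord z k + b%:R * \sum_(1 <= k < (d - j).+1) ycoord z k)
  / (b%:R * b%:R - 1).

Lemma cone_ineqs_decomp (z : 'rV[R]_d) : cone_ineqs b d (ycoord z) ->
  (forall i, (1 <= i)%N -> (i <= d - 1)%N -> 0 <= cone_coef z i) /\
  z = \sum_(1 <= i < d) cone_coef z i *: cone_gen i.
Proof.
move=> [sum0 head_tail_ge0].
have D_gt0 : (0 : R) < b%:R * b%:R - 1 by rewrite subr_gt0 -natrM ltr1n; lia.
split=> [i i_ge1 i_le | ].
  rewrite /cone_coef divr_ge0 ?(ltW D_gt0) // -(head_tail_prefix b sum0); last by lia.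
  exact: head_tail_ge0.
have coef0 : cone_coef z 0 = 0.
  by rewrite /cone_coef subn0 sum0 big_geq // mulr0 addr0 mul0r.
have coefd : cone_coef z d = 0.
  by rewrite /cone_coef subnn sum0 big_geq // mulr0 addr0 mul0r.
apply/rowP => k; have k_lt := ltn_ord k; have k_le := ltnW k_lt.
have prefix_succ : \sum_(1 <= i < k.+2) ycoord z i = \sum_(1 <= i < k.+1) ycoord z i + z ord0 k.
  by rewrite big_nat_recr // ycoordE.
rewrite sum_cone_gen_entry // /cone_coef !subKn // prefix_succ.
by field; rewrite gt_eqF.
Qed.

Lemma RegDual_coneP (z : 'rV[R]_d) : RegDual b z <-> cone_ineqs b d (ycoord z).
Proof.
split; first by apply: RegDual_cone_ineqs; lia.
by move=> /cone_ineqs_decomp [coef_ge0 ->]; apply: cone_RegDual.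
Qed.

Lemma cone_ineqsP (z : 'rV[R]_d) :
  cone_ineqs b d (ycoord z) <->
  exists lam : nat -> R, (forall i, (1 <= i)%N -> (i <= d - 1)%N -> 0 <= lam i) /\
    z = \sum_(1 <= i < d) lam i *: cone_gen i.
Proof.
split=> [/cone_ineqs_decomp coef | [lam [lam_ge0 ->]]]; first by exists (cone_coef z).
by apply/RegDual_coneP; apply: cone_RegDual.
Qed.

End Cone.

Theorem mainTheorem14 (R : realFieldType) (b d : nat)
  (hb : (2 <= b)%N) (hd : (1 <= d)%N) :
  let shift : 'rV[R]_d := (2 / (b%:R + 1)) *: rho R d in
  let ineqs (y : 'rV[R]_d) : Prop :=
    \sum_(1 <= k < d.+1) ycoord y k = 0 /\
    (forall s, (1 <= s)%N -> (s <= d - 1)%N ->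
       (s * (d - s))%:R <=
       \sum_(1 <= k < s.+1) ycoord y k
       - b%:R * \sum_(d.+1 - s <= k < d.+1) ycoord y k) in
  (forall y : 'rV[R]_d, Aset b (@Qmin R d) y <-> RegDual b (y - shift)) /\
  (forall y : 'rV[R]_d, Aset b (@Qmin R d) y <-> ineqs y) /\
  (forall y : 'rV[R]_d, ineqs y <->
     exists lam : nat -> R,
       (forall i, (1 <= i)%N -> (i <= d - 1)%N -> 0 <= lam i) /\
       y = shift + \sum_(1 <= i < d)
                     lam i *: (b%:R *: vvec R d (d - i) - vvec R d i)).
Proof.
move=> shift ineqs.
have Aset_ineqs y : Aset b (@Qmin R d) y <-> ineqs y.
  by apply: Aset_QminE => //; rewrite gtn_eqF.
have ineqs_cone y : ineqs y <-> cone_ineqs b d (ycoord (y - shift)).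
  exact: Amin_ineqs_shift.
split; [|split] => // y.
  apply: (iff_trans (Aset_ineqs y)); apply: (iff_trans (ineqs_cone y)).
  exact: iff_sym (RegDual_coneP hb _).
apply: (iff_trans (ineqs_cone y)); apply: (iff_trans (cone_ineqsP hb _)).
split=> -[lam [lam_ge0 y_eq]]; exists lam; split=> //.
  by rewrite -y_eq addrC subrK.
by rewrite y_eq addrC addKr.
Qed.
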